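(* Let $\mathbb{T}$ be a time scale, $a,b\in\mathbb{T}$ with $a<b$, $B\in\mathbb{R}$, and let $\varphi:[a,b]^\kappa_{\mathbb{T}}\to\mathbb{R}$ be positive and rd-continuous, with $$\frac{B+\int_a^b\varphi(s)\Delta s}{b-a}>\varphi(t)\quad\text{for all } t\in[a,b]^\kappa_{\mathbb{T}}.$$ Then, among all $C^1_{\mathrm{rd}}$-functions $y:[a,b]_{\mathbb{T}}\to\mathbb{R}$ satisfying $y^\Delta>0$ on $[a,b]^\kappa_{\mathbb{T}}$, $y(a)=0$ and $y(b)=B$, the functional $$\mathcal{F}(y)=\int_a^b[\varphi(t)+y^\Delta(t)]\ln[\varphi(t)+y^\Delta(t)]\Delta t$$ has minimum value $\mathcal{F}_{\min}=(b-a)C\ln(C)$, attained at $$y(t)=C(t-a)-\int_a^t\varphi(s)\Delta s,\quad t\in[a,b]_{\mathbb{T}},$$ where $C=\frac{B+\int_a^b\varphi(s)\Delta s}{b-a}$.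
   Context: A time scale $\mathbb{T}$ is a nonempty closed subset of $\mathbb{R}$; $[a,b]_{\mathbb{T}}=[a,b]\cap\mathbb{T}$. $[a,b]^\kappa_{\mathbb{T}}$ equals $[a,b]_{\mathbb{T}}$ with $b$ removed if $b$ is left-scattered, and $[a,b]_{\mathbb{T}}$ otherwise. $y^\Delta$ denotes the delta derivative ($y'$ on $\mathbb{R}$, $y(t+1)-y(t)$ on $\mathbb{Z}$); $C^1_{\mathrm{rd}}$ denotes functions delta differentiable on $[a,b]^\kappa_{\mathbb{T}}$ with rd-continuous delta derivative (rd-continuous: continuous at right-dense points, finite left limits at left-dense points). $\int\cdot\,\Delta t$ is the delta integral. *)

From Stdlib Require Import Reals Lra ClassicalEpsilon.
Open Scope R_scope.

Definition ts_closed (T : R -> Prop) : Prop :=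
  forall x, (forall eps, 0 < eps -> exists y, T y /\ Rabs (y - x) < eps) -> T x.
Definition time_scale (T : R -> Prop) : Prop := (exists x, T x) /\ ts_closed T.

Definition tsI (T : R -> Prop) (a b : R) : R -> Prop := fun t => T t /\ a <= t <= b.

Definition is_inf (P : R -> Prop) (s : R) : Prop :=
  (forall u, P u -> s <= u) /\ (forall m, (forall u, P u -> m <= u) -> m <= s).
Definition is_sup (P : R -> Prop) (s : R) : Prop :=
  (forall u, P u -> u <= s) /\ (forall m, (forall u, P u -> u <= m) -> s <= m).

(** Forward jump sigma(t) = inf{s in X | s > t}, with inf of empty set = t
    (this only happens when t = max X, where sup X = t). *)
Definition sigma (X : R -> Prop) (t : R) : R :=
  epsilon (inhabits 0) (fun s =>
    ((exists u, X u /\ t < u) /\ is_inf (fun u => X u /\ t < u) s) \/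
    (~ (exists u, X u /\ t < u) /\ s = t)).

(** Backward jump rho(t) = sup{s in X | s < t}, with sup of empty set = t. *)
Definition rho (X : R -> Prop) (t : R) : R :=
  epsilon (inhabits 0) (fun s =>
    ((exists u, X u /\ u < t) /\ is_sup (fun u => X u /\ u < t) s) \/
    (~ (exists u, X u /\ u < t) /\ s = t)).

Definition kappa (X : R -> Prop) (t : R) : Prop :=
  X t /\ ~ ((forall u, X u -> u <= t) /\ rho X t < t).

Definition is_delta_deriv (X : R -> Prop) (f : R -> R) (t l : R) : Prop :=
  forall eps, 0 < eps -> exists delta, 0 < delta /\
    forall s, X s -> Rabs (t - s) < delta ->
      Rabs (f (sigma X t) - f s - l * (sigma X t - s)) <= eps * Rabs (sigma X t - s).

(** rd-continuity of f : D -> R, density measured in the time scale X (D ⊆ X):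
    continuous at right-dense points, finite left limits at left-dense points. *)
Definition rd_continuous (X D : R -> Prop) (f : R -> R) : Prop :=
  forall t, D t ->
    (sigma X t = t -> forall eps, 0 < eps -> exists delta, 0 < delta /\
       forall s, D s -> Rabs (s - t) < delta -> Rabs (f s - f t) < eps) /\
    (rho X t = t -> exists L, forall eps, 0 < eps -> exists delta, 0 < delta /\
       forall s, D s -> t - delta < s < t -> Rabs (f s - L) < eps).

Definition C1rd (X : R -> Prop) (y yd : R -> R) : Prop :=
  (forall t, kappa X t -> is_delta_deriv X y t (yd t)) /\ rd_continuous X (kappa X) yd.

(** Delta integral via antiderivatives (Bohner–Peterson Def. 1.71):
    int_r^s f Δt = F s - F r where F^Δ = f on X^kappa. *)
Definition is_delta_antideriv (X : R -> Prop) (f F : R -> R) : Prop :=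
  forall t, kappa X t -> is_delta_deriv X F t (f t).
Definition delta_int (X : R -> Prop) (f : R -> R) (r s : R) : R :=
  epsilon (inhabits 0) (fun v => exists F, is_delta_antideriv X f F /\ v = F s - F r).

Definition Ffun (X : R -> Prop) (phi yd : R -> R) (a b : R) : R :=
  delta_int X (fun t => (phi t + yd t) * ln (phi t + yd t)) a b.

(* Since x ln x is convex, it lies above its tangent line at C:
   (phi + y^Delta) ln (phi + y^Delta) >= C ln C + (1 + ln C) (phi + y^Delta - C).
   Delta-integrating over [a, b] and using y(a) = 0, y(b) = B gives
   F(y) >= (b - a) C ln C + (1 + ln C) (B + int phi - C (b - a)) = (b - a) C ln C,
   with equality when phi + y^Delta = C, i.e. for the extremal y.
   Most of the work is the calculus behind this: a delta derivative >= 0 makes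
   a function nondecreasing (by induction on the time scale), hence
   antiderivatives are unique up to constants and delta integrals are monotone;
   and every rd-continuous f has an antiderivative, the Riemann integral of the
   regulated step extension s |-> f (largest point of the time scale <= s). *)
From Stdlib Require Import Reals Lra Classical ClassicalEpsilon FunctionalExtensionality.
From Coquelicot Require Import Coquelicot.
Open Scope R_scope.

Lemma is_sup_exists (P : R -> Prop) :
  (exists x, P x) -> (exists M, forall u, P u -> u <= M) -> exists s, is_sup P s.
Proof.
  intros Hne [M HM].
  destruct (completeness P) as [s [Hs1 Hs2]]; [exists M; exact HM | exact Hne |].
  exists s; split; [exact Hs1 | exact Hs2].
Qed.

Lemma is_inf_exists (P : R -> Prop) :
  (exists x, P x) -> (exists M, forall u, P u -> M <= u) -> exists s, is_inf P s.
Proof.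
  intros [x Hx] [M HM].
  destruct (is_sup_exists (fun v => P (- v))) as [s [Hs1 Hs2]].
  - exists (- x); rewrite Ropp_involutive; exact Hx.
  - exists (- M); intros u Hu; specialize (HM _ Hu); lra.
  - exists (- s); split.
    + intros u Hu. assert (- u <= s) by (apply Hs1; rewrite Ropp_involutive; exact Hu). lra.
    + intros m Hm. assert (s <= - m); [|lra].
      apply Hs2; intros u Hu; specialize (Hm _ Hu); lra.
Qed.

Lemma closed_is_inf_mem (X P : R -> Prop) s :
  ts_closed X -> (forall u, P u -> X u) -> is_inf P s -> X s.
Proof.
  intros HX HPX [Hlow Hgreat]. apply HX. intros eps Heps.
  destruct (classic (exists u, P u /\ u < s + eps)) as [[u [Pu Hu]] | Hno].
  - exists u; split; [exact (HPX u Pu) |].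
    specialize (Hlow u Pu). rewrite Rabs_right; lra.
  - assert (s + eps <= s); [|lra]. apply Hgreat. intros u Pu.
    apply Rnot_lt_le; intros Hu. apply Hno; exists u; split; assumption.
Qed.

Lemma closed_is_sup_mem (X P : R -> Prop) s :
  ts_closed X -> (forall u, P u -> X u) -> is_sup P s -> X s.
Proof.
  intros HX HPX [Hup Hleast]. apply HX. intros eps Heps.
  destruct (classic (exists u, P u /\ s - eps < u)) as [[u [Pu Hu]] | Hno].
  - exists u; split; [exact (HPX u Pu) |].
    specialize (Hup u Pu). rewrite Rabs_left1; lra.
  - assert (s <= s - eps); [|lra]. apply Hleast. intros u Pu.
    apply Rnot_lt_le; intros Hu. apply Hno; exists u; split; assumption.
Qed.

Section Jumps.

Variable X : R -> Prop.

Lemma sigma_spec t :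
  ((exists u, X u /\ t < u) /\ is_inf (fun u => X u /\ t < u) (sigma X t)) \/
  (~ (exists u, X u /\ t < u) /\ sigma X t = t).
Proof.
  unfold sigma. apply epsilon_spec.
  destruct (classic (exists u, X u /\ t < u)) as [H | H].
  - destruct (is_inf_exists (fun u => X u /\ t < u)) as [s Hs]; [exact H | |].
    + exists t; intros u [_ Hu]; lra.
    + exists s; left; split; assumption.
  - exists t; right; split; [exact H | reflexivity].
Qed.

Lemma rho_spec t :
  ((exists u, X u /\ u < t) /\ is_sup (fun u => X u /\ u < t) (rho X t)) \/
  (~ (exists u, X u /\ u < t) /\ rho X t = t).
Proof.
  unfold rho. apply epsilon_spec.
  destruct (classic (exists u, X u /\ u < t)) as [H | H].
  - destruct (is_sup_exists (fun u => X u /\ u < t)) as [s Hs]; [exact H | |].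
    + exists t; intros u [_ Hu]; lra.
    + exists s; left; split; assumption.
  - exists t; right; split; [exact H | reflexivity].
Qed.

Lemma sigma_ge t : t <= sigma X t.
Proof.
  destruct (sigma_spec t) as [[_ [_ Hgreat]] | [_ ->]]; [| lra].
  apply Hgreat; intros u [_ Hu]; lra.
Qed.

Lemma sigma_le t u : X u -> t < u -> sigma X t <= u.
Proof.
  intros Xu Htu. destruct (sigma_spec t) as [[_ [Hlow _]] | [Hno _]].
  - apply Hlow; split; assumption.
  - exfalso; apply Hno; exists u; split; assumption.
Qed.

Lemma rho_le t : rho X t <= t.
Proof.
  destruct (rho_spec t) as [[_ [_ Hleast]] | [_ ->]]; [| lra].
  apply Hleast; intros u [_ Hu]; lra.
Qed.

Lemma rho_ge t u : X u -> u < t -> u <= rho X t.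
Proof.
  intros Xu Hut. destruct (rho_spec t) as [[_ [Hup _]] | [Hno _]].
  - apply Hup; split; assumption.
  - exfalso; apply Hno; exists u; split; assumption.
Qed.

Lemma kappa_left_dense t : X t -> rho X t = t -> kappa X t.
Proof. intros Xt Hrho. split; [exact Xt | intros [_ H]; lra]. Qed.

End Jumps.

Section DeltaDerivative.

Variable X : R -> Prop.

Lemma delta_deriv_ext f g t l :
  (forall u, X u -> f u = g u) -> X (sigma X t) ->
  is_delta_deriv X f t l -> is_delta_deriv X g t l.
Proof.
  intros Hfg Xsg Hf eps Heps. destruct (Hf eps Heps) as [d [Hd Hfd]].
  exists d; split; [exact Hd |]. intros s Xs Hts.
  rewrite <- (Hfg _ Xsg), <- (Hfg _ Xs). exact (Hfd s Xs Hts).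
Qed.

Lemma delta_deriv_const t k : is_delta_deriv X (fun _ => k) t 0.
Proof.
  intros eps Heps. exists 1; split; [lra |]. intros s _ _.
  replace (k - k - 0 * (sigma X t - s)) with 0 by ring. rewrite Rabs_R0.
  apply Rmult_le_pos; [lra | apply Rabs_pos].
Qed.

Lemma delta_deriv_id t : is_delta_deriv X (fun x => x) t 1.
Proof.
  intros eps Heps. exists 1; split; [lra |]. intros s _ _.
  replace (sigma X t - s - 1 * (sigma X t - s)) with 0 by ring. rewrite Rabs_R0.
  apply Rmult_le_pos; [lra | apply Rabs_pos].
Qed.

Lemma delta_deriv_lincomb f g t l m al be :
  is_delta_deriv X f t l -> is_delta_deriv X g t m ->
  is_delta_deriv X (fun x => al * f x + be * g x) t (al * l + be * m).
Proof.
  intros Hf Hg eps Heps.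
  set (K := Rabs al + Rabs be + 1).
  assert (HK : 0 < K) by (unfold K; pose proof (Rabs_pos al); pose proof (Rabs_pos be); lra).
  set (e := eps / K). assert (He : 0 < e) by (unfold e; apply Rdiv_lt_0_compat; lra).
  destruct (Hf e He) as [d1 [Hd1 H1]]. destruct (Hg e He) as [d2 [Hd2 H2]].
  exists (Rmin d1 d2); split; [apply Rmin_pos; assumption |].
  intros s Xs Hts.
  specialize (H1 s Xs (Rlt_le_trans _ _ _ Hts (Rmin_l _ _))).
  specialize (H2 s Xs (Rlt_le_trans _ _ _ Hts (Rmin_r _ _))).
  set (A := f (sigma X t) - f s - l * (sigma X t - s)) in *.
  set (B := g (sigma X t) - g s - m * (sigma X t - s)) in *.
  replace (al * f (sigma X t) + be * g (sigma X t) - (al * f s + be * g s) -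
     (al * l + be * m) * (sigma X t - s)) with (al * A + be * B) by (unfold A, B; ring).
  set (D := Rabs (sigma X t - s)) in *.
  assert (HD : 0 <= D) by apply Rabs_pos.
  eapply Rle_trans; [apply Rabs_triang |]. rewrite !Rabs_mult.
  assert (Rabs al * Rabs A <= Rabs al * (e * D)) by (apply Rmult_le_compat_l; [apply Rabs_pos | exact H1]).
  assert (Rabs be * Rabs B <= Rabs be * (e * D)) by (apply Rmult_le_compat_l; [apply Rabs_pos | exact H2]).
  assert (HeK : e * K = eps) by (unfold e; field; lra).
  assert ((Rabs al + Rabs be) * (e * D) <= eps * D).
  { rewrite <- HeK. unfold K. pose proof (Rabs_pos al). pose proof (Rabs_pos be).
    assert (0 <= e * D) by (apply Rmult_le_pos; lra). nra. }
  lra.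
Qed.

Lemma delta_deriv_right_scattered f t l :
  X t -> t < sigma X t -> is_delta_deriv X f t l ->
  f (sigma X t) - f t = l * (sigma X t - t).
Proof.
  intros Xt Hlt Hf. set (A := f (sigma X t) - f t - l * (sigma X t - t)).
  destruct (Req_dec A 0) as [HA | HA]; [unfold A in HA; lra | exfalso].
  set (mu := sigma X t - t). assert (Hmu : 0 < mu) by (unfold mu; lra).
  assert (HAp : 0 < Rabs A) by (apply Rabs_pos_lt; exact HA).
  destruct (Hf (Rabs A / (2 * mu))) as [d [Hd Hfd]]; [apply Rdiv_lt_0_compat; lra |].
  specialize (Hfd t Xt). rewrite Rminus_diag, Rabs_R0 in Hfd. specialize (Hfd Hd).
  fold A in Hfd. rewrite (Rabs_right (sigma X t - t)) in Hfd by lra. fold mu in Hfd.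
  replace (Rabs A / (2 * mu) * mu) with (Rabs A / 2) in Hfd by (field; lra). lra.
Qed.

(* At [s = t] the defining estimate bounds the jump [f (sigma t) - f t]; the
   estimate at [s] then pins [f s] to within [eps] of [f t]. *)
Lemma delta_deriv_continuous f t l :
  X t -> is_delta_deriv X f t l ->
  forall eps, 0 < eps -> exists d, 0 < d /\
    forall s, X s -> Rabs (t - s) < d -> Rabs (f s - f t) < eps.
Proof.
  intros Xt Hf eps Heps.
  set (mu := sigma X t - t). assert (Hmu : 0 <= mu) by (unfold mu; pose proof (sigma_ge X t); lra).
  set (e := eps / (4 * (mu + 1))). assert (He : 0 < e) by (unfold e; apply Rdiv_lt_0_compat; lra).
  destruct (Hf e He) as [d1 [Hd1 H1]].
  set (d2 := eps / (4 * (Rabs l + 1))).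
  assert (Hd2 : 0 < d2) by (unfold d2; apply Rdiv_lt_0_compat; pose proof (Rabs_pos l); lra).
  exists (Rmin d1 (Rmin 1 d2)); split; [repeat apply Rmin_pos; lra |].
  intros s Xs Hts.
  pose proof (Rmin_l d1 (Rmin 1 d2)). pose proof (Rmin_r d1 (Rmin 1 d2)).
  pose proof (Rmin_l 1 d2). pose proof (Rmin_r 1 d2).
  pose proof (H1 t Xt) as HA. rewrite Rminus_diag, Rabs_R0 in HA. specialize (HA Hd1).
  pose proof (H1 s Xs ltac:(lra)) as HB.
  rewrite (Rabs_right (sigma X t - t)) in HA by (pose proof (sigma_ge X t); lra). fold mu in HA.
  set (A := f (sigma X t) - f t - l * mu) in *.
  set (B := f (sigma X t) - f s - l * (sigma X t - s)) in *.
  replace (f s - f t) with (A - B - l * (t - s)) by (unfold A, B, mu; ring).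
  assert (Hsg : Rabs (sigma X t - s) <= mu + Rabs (t - s)).
  { replace (sigma X t - s) with (mu + (t - s)) by (unfold mu; ring).
    eapply Rle_trans; [apply Rabs_triang |]. rewrite (Rabs_right mu) by lra. lra. }
  assert (He4 : e * (mu + 1) = eps / 4) by (unfold e; field; lra).
  assert (Hl4 : Rabs l * d2 <= eps / 4).
  { unfold d2. pose proof (Rabs_pos l).
    apply Rmult_le_reg_r with (4 * (Rabs l + 1)); [lra |].
    replace (Rabs l * (eps / (4 * (Rabs l + 1))) * (4 * (Rabs l + 1))) with (Rabs l * eps)
      by (field; lra). nra. }
  assert (Rabs l * Rabs (t - s) <= Rabs l * d2) by (apply Rmult_le_compat_l; [apply Rabs_pos | lra]).
  assert (e * Rabs (sigma X t - s) <= e * (mu + 1)) by (apply Rmult_le_compat_l; lra).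
  assert (e * mu <= e * (mu + 1)) by (apply Rmult_le_compat_l; lra).
  assert (Htri : Rabs (A - B - l * (t - s)) <= Rabs A + Rabs B + Rabs l * Rabs (t - s)).
  { unfold Rminus. rewrite <- Rabs_mult, <- (Rabs_Ropp B), <- (Rabs_Ropp (l * _)).
    eapply Rle_trans; [apply Rabs_triang |].
    apply Rplus_le_compat_r, Rabs_triang. }
  lra.
Qed.

End DeltaDerivative.

Definition ts_segment (X : R -> Prop) (a b : R) : Prop :=
  ts_closed X /\ X a /\ X b /\ a < b /\ (forall u, X u -> a <= u <= b).

Section Segment.

Variables (X : R -> Prop) (a b : R).
Hypothesis HX : ts_segment X a b.

Lemma segment_closed : ts_closed X.
Proof. apply HX. Qed.

Lemma segment_min_mem : X a.
Proof. apply HX. Qed.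

Lemma segment_max_mem : X b.
Proof. apply HX. Qed.

Lemma segment_lt : a < b.
Proof. apply HX. Qed.

Lemma segment_bounds u : X u -> a <= u <= b.
Proof. apply HX. Qed.

Lemma sigma_mem t : X t -> X (sigma X t).
Proof.
  intros Xt. destruct (sigma_spec X t) as [[_ Hinf] | [_ ->]]; [| exact Xt].
  apply (closed_is_inf_mem X (fun u => X u /\ t < u)); [exact segment_closed | tauto | exact Hinf].
Qed.

Lemma rho_mem t : X t -> X (rho X t).
Proof.
  intros Xt. destruct (rho_spec X t) as [[_ Hsup] | [_ ->]]; [| exact Xt].
  apply (closed_is_sup_mem X (fun u => X u /\ u < t)); [exact segment_closed | tauto | exact Hsup].
Qed.

Lemma right_dense_approx t : sigma X t = t -> t < b ->
  forall d, 0 < d -> exists u, X u /\ t < u < t + d.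
Proof.
  intros Hsg Htb d Hd. apply NNPP; intros Hno.
  destruct (sigma_spec X t) as [[_ [_ Hgreat]] | [Hempty _]].
  - assert (t + d <= sigma X t); [| lra]. apply Hgreat. intros u [Xu Htu].
    apply Rnot_lt_le; intros Hu. apply Hno; exists u; split; [exact Xu | lra].
  - apply Hempty; exists b; split; [exact segment_max_mem | exact Htb].
Qed.

Lemma left_dense_approx t : rho X t = t -> a < t ->
  forall d, 0 < d -> exists u, X u /\ t - d < u < t.
Proof.
  intros Hrho Hat d Hd. apply NNPP; intros Hno.
  destruct (rho_spec X t) as [[_ [_ Hleast]] | [Hempty _]].
  - assert (rho X t <= t - d); [| lra]. apply Hleast. intros u [Xu Hut].
    apply Rnot_lt_le; intros Hu. apply Hno; exists u; split; [exact Xu | lra].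
  - apply Hempty; exists a; split; [exact segment_min_mem | exact Hat].
Qed.

Lemma sigma_rho t : X t -> rho X t < t -> sigma X (rho X t) = t.
Proof.
  intros Xt Hlt. set (p := rho X t) in *.
  assert (Xp : X p) by (apply rho_mem; exact Xt).
  assert (Hle : sigma X p <= t) by (apply sigma_le; assumption).
  destruct (Rle_lt_or_eq_dec _ _ Hle) as [Hsg | Heq]; [exfalso | exact Heq].
  assert (sigma X p <= p) by (apply rho_ge; [apply sigma_mem; exact Xp | exact Hsg]).
  pose proof (sigma_ge X p).
  destruct (right_dense_approx p ltac:(lra)) with (d := t - p) as [u [Xu Hu]].
  - pose proof (segment_bounds t Xt). lra.
  - lra.
  - assert (u <= p) by (apply rho_ge; [exact Xu | lra]). lra.
Qed.

Lemma kappa_of_lt t : X t -> t < b -> kappa X t.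
Proof.
  intros Xt Htb. split; [exact Xt |]. intros [Hmax _].
  specialize (Hmax b segment_max_mem). lra.
Qed.

Lemma ts_induction (P : R -> Prop) r s :
  X r -> P r ->
  (forall t, X t -> r <= t < s -> t < sigma X t -> P t -> P (sigma X t)) ->
  (forall t, X t -> r <= t < s -> sigma X t = t -> P t ->
     exists d, 0 < d /\ forall u, X u -> t < u < t + d -> P u) ->
  (forall t, X t -> r < t <= s -> rho X t = t ->
     (forall u, X u -> r <= u < t -> P u) -> P t) ->
  forall t, X t -> r <= t <= s -> P t.
Proof.
  intros Xr Pr Hscattered Hdense Hleft t Xt Ht. apply NNPP; intros nPt.
  set (Bad := fun u => X u /\ r <= u <= s /\ ~ P u).
  destruct (is_inf_exists Bad) as [m [Hlow Hgreat]].
  { exists t; split; [exact Xt | split; [exact Ht | exact nPt]]. }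
  { exists r; intros u (_ & Hu & _); lra. }
  assert (Xm : X m).
  { apply (closed_is_inf_mem X Bad); [exact segment_closed | intros u []; assumption |].
    split; assumption. }
  assert (Hrm : r <= m) by (apply Hgreat; intros u (_ & Hu & _); lra).
  assert (Hms : m <= s) by (apply Rle_trans with t; [apply Hlow; split; [exact Xt | split; [exact Ht | exact nPt]] | lra]).
  assert (Hgood : forall u, X u -> r <= u < m -> P u).
  { intros u Xu Hu. apply NNPP; intros nPu.
    assert (m <= u) by (apply Hlow; repeat split; auto; lra). lra. }
  assert (Hnear : forall d, 0 < d -> exists u, Bad u /\ u < m + d).
  { intros d Hd. apply NNPP; intros Hno. assert (m + d <= m); [| lra].
    apply Hgreat. intros u Bu. apply Rnot_lt_le; intros Hu. apply Hno; exists u; split; assumption. }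
  destruct (classic (P m)) as [Pm | nPm].
  - assert (Hright : forall u, Bad u -> m < u).
    { intros u Bu. assert (m <= u) by (apply Hlow; exact Bu).
      destruct (Req_dec m u) as [<- | Hne]; [destruct Bu as (_ & _ & nPm); contradiction | lra]. }
    destruct (Hnear 1 Rlt_0_1) as [u0 [Bu0 _]].
    assert (Hm_s : m < s) by (pose proof (Hright u0 Bu0); destruct Bu0 as (_ & ? & _); lra).
    destruct (Rle_lt_or_eq_dec _ _ (sigma_ge X m)) as [Hsc | Hde].
    + assert (sigma X m <= m); [| lra].
      apply Hgreat. intros u Bu. apply sigma_le; [apply Bu | exact (Hright u Bu)].
    + destruct (Hdense m Xm ltac:(lra) (eq_sym Hde) Pm) as [d [Hd HPd]].
      destruct (Hnear d Hd) as [u [Bu Hu]]. pose proof (Hright u Bu).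
      destruct Bu as (Xu & _ & nPu). apply nPu, HPd; [exact Xu | lra].
  - assert (Hrm' : r < m) by (destruct (Req_dec r m) as [<- |]; [contradiction | lra]).
    destruct (Rle_lt_or_eq_dec _ _ (rho_le X m)) as [Hsc | Hde].
    + assert (Hrp : r <= rho X m) by (apply rho_ge; assumption).
      apply nPm. rewrite <- (sigma_rho m Xm Hsc).
      apply Hscattered; [apply rho_mem; exact Xm | lra | rewrite (sigma_rho m Xm Hsc); exact Hsc |].
      apply Hgood; [apply rho_mem; exact Xm | lra].
    + apply nPm, Hleft; [exact Xm | lra | exact Hde | exact Hgood].
Qed.

Lemma delta_deriv_nonneg_approx F r s eps :
  (forall t, kappa X t -> exists l, 0 <= l /\ is_delta_deriv X F t l) ->
  X r -> X s -> r <= s -> 0 < eps -> F r - eps * (s - r) <= F s.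
Proof.
  intros HD Xr Xs Hrs Heps.
  pose proof (segment_bounds s Xs).
  apply (ts_induction (fun u => F r - eps * (u - r) <= F u) r s);
    [exact Xr | rewrite Rminus_diag, Rmult_0_r; lra | | | | exact Xs | lra].
  - intros t Xt Ht Hsc Pt.
    destruct (HD t (kappa_of_lt t Xt ltac:(lra))) as [l [Hl Hd]].
    pose proof (delta_deriv_right_scattered X F t l Xt Hsc Hd).
    assert (0 <= l * (sigma X t - t)) by (apply Rmult_le_pos; lra).
    assert (eps * (t - r) <= eps * (sigma X t - r)) by (apply Rmult_le_compat_l; lra).
    lra.
  - intros t Xt Ht Hde Pt.
    destruct (HD t (kappa_of_lt t Xt ltac:(lra))) as [l [Hl Hd]].
    destruct (Hd eps Heps) as [d [Hdp Hdt]]. exists d; split; [exact Hdp |].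
    intros u Xu Hu. specialize (Hdt u Xu). rewrite Hde in Hdt.
    rewrite Rabs_left1 in Hdt by lra.
    assert (Hx : F t - F u - l * (t - u) <= eps * - (t - u)).
    { eapply Rle_trans; [apply Rle_abs | apply Hdt; lra]. }
    assert (0 <= l * (u - t)) by (apply Rmult_le_pos; lra).
    nra.
  - intros t Xt Ht Hrho Hbefore. apply Rnot_lt_le; intros Hlt.
    destruct (HD t (kappa_left_dense X t Xt Hrho)) as [l [_ Hd]].
    set (eta := F r - eps * (t - r) - F t).
    destruct (delta_deriv_continuous X F t l Xt Hd eta) as [d [Hdp Hdt]]; [unfold eta; lra |].
    pose proof (segment_bounds r Xr).
    destruct (left_dense_approx t Hrho ltac:(lra) (Rmin d (t - r))) as [u [Xu Hu]];
      [apply Rmin_pos; lra |].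
    pose proof (Rmin_l d (t - r)). pose proof (Rmin_r d (t - r)).
    assert (F r - eps * (u - r) <= F u) by (apply Hbefore; [exact Xu | lra]).
    assert (eps * (u - r) <= eps * (t - r)) by (apply Rmult_le_compat_l; lra).
    assert (Rabs (F u - F t) < eta) by (apply Hdt; [exact Xu | rewrite Rabs_right; lra]).
    pose proof (Rle_abs (F u - F t)). unfold eta in *. lra.
Qed.

Lemma delta_deriv_nonneg_le F r s :
  (forall t, kappa X t -> exists l, 0 <= l /\ is_delta_deriv X F t l) ->
  X r -> X s -> r <= s -> F r <= F s.
Proof.
  intros HD Xr Xs Hrs. apply Rnot_lt_le; intros Hlt.
  set (eps := (F r - F s) / (2 * (s - r + 1))).
  assert (He : 0 < eps) by (unfold eps; apply Rdiv_lt_0_compat; lra).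
  pose proof (delta_deriv_nonneg_approx F r s eps HD Xr Xs Hrs He).
  assert (eps * (s - r + 1) = (F r - F s) / 2) by (unfold eps; field; lra).
  nra.
Qed.

Lemma antideriv_unique f F G r s :
  is_delta_antideriv X f F -> is_delta_antideriv X f G -> X r -> X s ->
  G s - G r = F s - F r.
Proof.
  intros HF HG Xr Xs.
  assert (Hconst : forall al, (forall t, kappa X t ->
            exists l, 0 <= l /\ is_delta_deriv X (fun x => al * F x + - al * G x) t l)).
  { intros al t Kt. exists 0; split; [lra |].
    replace 0 with (al * f t + - al * f t) by ring.
    apply delta_deriv_lincomb; [apply HF | apply HG]; exact Kt. }
  destruct (Rle_dec r s) as [Hrs | Hsr].
  - pose proof (delta_deriv_nonneg_le _ r s (Hconst 1) Xr Xs Hrs).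
    pose proof (delta_deriv_nonneg_le _ r s (Hconst (-1)) Xr Xs Hrs). lra.
  - pose proof (delta_deriv_nonneg_le _ s r (Hconst 1) Xs Xr ltac:(lra)).
    pose proof (delta_deriv_nonneg_le _ s r (Hconst (-1)) Xs Xr ltac:(lra)). lra.
Qed.

Lemma delta_int_antideriv f F r s :
  is_delta_antideriv X f F -> X r -> X s -> delta_int X f r s = F s - F r.
Proof.
  intros HF Xr Xs. unfold delta_int.
  match goal with |- epsilon ?i ?P = _ =>
    assert (HP : P (epsilon i P)) by (apply epsilon_spec; exists (F s - F r), F; split; auto)
  end.
  destruct HP as [G [HG ->]]. exact (antideriv_unique f F G r s HF HG Xr Xs).
Qed.

Lemma delta_int_le f g F G :
  is_delta_antideriv X f F -> is_delta_antideriv X g G ->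
  (forall t, kappa X t -> f t <= g t) -> F b - F a <= G b - G a.
Proof.
  intros HF HG Hfg.
  enough (-1 * F a + 1 * G a <= -1 * F b + 1 * G b) by lra.
  apply (delta_deriv_nonneg_le (fun x => -1 * F x + 1 * G x) a b).
  - intros t Kt. exists (-1 * f t + 1 * g t); split; [specialize (Hfg t Kt); lra |].
    apply delta_deriv_lincomb; [apply HF | apply HG]; exact Kt.
  - exact segment_min_mem.
  - exact segment_max_mem.
  - left; exact segment_lt.
Qed.

End Segment.

(* The last point of [X] at or before [max a s].  Composed with it, a function
   on [X] becomes a regulated step-like function on the real line, whose
   Riemann integral is a delta antiderivative. *)
Definition ts_floor (X : R -> Prop) (a s : R) : R :=
  epsilon (inhabits 0) (fun m => is_sup (fun u => X u /\ u <= Rmax a s) m).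

Lemma ts_floor_below X a s : s <= a -> ts_floor X a s = ts_floor X a a.
Proof.
  intros Hsa. unfold ts_floor.
  rewrite (Rmax_left a s Hsa), (Rmax_left a a (Rle_refl a)). reflexivity.
Qed.

Section Floor.

Variables (X : R -> Prop) (a b : R).
Hypothesis HX : ts_segment X a b.

Lemma ts_floor_spec s :
  X (ts_floor X a s) /\ ts_floor X a s <= Rmax a s /\
  (forall u, X u -> u <= Rmax a s -> u <= ts_floor X a s).
Proof.
  assert (Hne : exists u, X u /\ u <= Rmax a s)
    by (exists a; split; [exact (segment_min_mem X a b HX) | apply Rmax_l]).
  assert (Hsup : is_sup (fun u => X u /\ u <= Rmax a s) (ts_floor X a s)).
  { unfold ts_floor. apply epsilon_spec, is_sup_exists; [exact Hne |].
    exists (Rmax a s); intros u [_ Hu]; exact Hu. }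
  destruct Hsup as [Hup Hleast]. split; [| split].
  - apply (closed_is_sup_mem X (fun u => X u /\ u <= Rmax a s));
      [exact (segment_closed X a b HX) | tauto | split; assumption].
  - apply Hleast. intros u [_ Hu]; exact Hu.
  - intros u Xu Hu. apply Hup; split; assumption.
Qed.

Lemma ts_floor_mem s : X (ts_floor X a s).
Proof. apply ts_floor_spec. Qed.

Lemma ts_floor_between p u : X p -> p <= u -> p <= ts_floor X a u <= u.
Proof.
  intros Xp Hpu. pose proof (segment_bounds X a b HX p Xp).
  destruct (ts_floor_spec u) as (_ & Hle & Hge). rewrite Rmax_right in * by lra.
  split; [apply Hge; assumption | exact Hle].
Qed.

Lemma ts_floor_id t : X t -> ts_floor X a t = t.
Proof. intros Xt. pose proof (ts_floor_between t t Xt (Rle_refl _)). lra. Qed.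

Lemma ts_floor_const u v : u <= v ->
  (forall w, X w -> ~ (u < w <= v)) -> ts_floor X a v = ts_floor X a u.
Proof.
  intros Huv Hgap.
  destruct (ts_floor_spec u) as (_ & _ & Hgeu). destruct (ts_floor_spec v) as (Xv & Hlev & Hgev).
  assert (Hmono : ts_floor X a u <= ts_floor X a v).
  { apply Hgev; [apply ts_floor_mem |].
    destruct (ts_floor_spec u) as (_ & Hleu & _). unfold Rmax in *.
    destruct (Rle_dec a u), (Rle_dec a v); lra. }
  apply Rle_antisym; [| exact Hmono]. apply Rnot_lt_le; intros Hlt.
  assert (Hgt : Rmax a u < ts_floor X a v).
  { apply Rnot_le_lt; intros Hle. specialize (Hgeu _ Xv Hle). lra. }
  pose proof (Rmax_l a u). pose proof (Rmax_r a u).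
  assert (Hav : a <= v) by (unfold Rmax in Hlev; destruct (Rle_dec a v); lra).
  rewrite Rmax_right in Hlev by lra.
  apply (Hgap _ Xv). lra.
Qed.

Lemma ts_floor_gap t s : X t -> t <= s < sigma X t -> ts_floor X a s = t.
Proof.
  intros Xt Hs. rewrite (ts_floor_const t s) by (try lra; intros w Xw Hw;
    assert (sigma X t <= w) by (apply sigma_le; [exact Xw | lra]); lra).
  apply ts_floor_id; exact Xt.
Qed.

End Floor.

Lemma RInt_minus_const (g : R -> R) x y c :
  ex_RInt g x y -> RInt (fun u => g u - c) x y = RInt g x y - c * (y - x).
Proof.
  intros Hg. pose proof (RInt_minus g (fun _ => c) x y Hg (ex_RInt_const _ _ _)) as E.
  rewrite RInt_const in E. refine (eq_trans E _).
  unfold minus, plus, opp, scal; simpl. unfold mult; simpl. ring.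
Qed.

Lemma RInt_Chasles_R (g : R -> R) x y z :
  ex_RInt g x y -> ex_RInt g y z -> RInt g x y + RInt g y z = RInt g x z.
Proof. intros. exact (RInt_Chasles g x y z H H0). Qed.

Lemma RInt_abs_le_const (g : R -> R) x y M : ex_RInt g x y ->
  (forall u, Rmin x y <= u <= Rmax x y -> Rabs (g u) <= M) ->
  Rabs (RInt g x y) <= M * Rabs (y - x).
Proof.
  intros Hg Hb. destruct (Rle_dec x y) as [Hxy | Hxy].
  - rewrite (Rabs_right (y - x)), Rmult_comm by lra. apply abs_RInt_le_const; auto.
    intros u Hu. apply Hb. rewrite Rmin_left, Rmax_right; lra.
  - assert (Hg' : ex_RInt g y x) by (apply ex_RInt_swap; exact Hg).
    rewrite <- (opp_RInt_swap g y x Hg'). change (Rabs (- RInt g y x) <= M * Rabs (y - x)).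
    rewrite Rabs_Ropp, (Rabs_left (y - x)) by lra.
    replace (- (y - x)) with (x - y) by ring. rewrite Rmult_comm.
    apply abs_RInt_le_const; auto; [lra |]. intros u Hu. apply Hb. rewrite Rmin_right, Rmax_left; lra.
Qed.

Section Antiderivative.

Variables (X : R -> Prop) (a b : R) (f : R -> R).
Hypothesis HX : ts_segment X a b.
Hypothesis Hf : rd_continuous X (kappa X) f.

Let ft s := f (ts_floor X a s).

(* No point of [X] just left of [m]: [ft] is constant there.  Otherwise [m]
   is left-dense and the left limit of [f] at [m] serves. *)
Lemma floor_left_limit m eps : 0 < eps ->
  exists d, 0 < d /\ exists c, forall u, m - d < u < m -> Rabs (ft u - c) <= eps.
Proof.
  intros Heps.
  destruct (classic (exists d, 0 < d /\ forall u, X u -> ~ (m - d < u < m)))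
    as [[d [Hd Hgap]] | Hacc].
  - exists d; split; [exact Hd |]. exists (ft (m - d)). intros u Hu. unfold ft.
    rewrite (ts_floor_const X a b HX (m - d) u) by (try lra; intros w Xw Hw; apply (Hgap w Xw); lra).
    rewrite Rminus_diag, Rabs_R0; lra.
  - assert (Hnear : forall d, 0 < d -> exists u, X u /\ m - d < u < m).
    { intros d Hd. apply NNPP; intros Hn. apply Hacc. exists d; split; [exact Hd |].
      intros u Xu Hu. apply Hn. exists u; split; assumption. }
    assert (Xm : X m).
    { apply (segment_closed X a b HX). intros e He. destruct (Hnear e He) as [u [Xu Hu]].
      exists u; split; [exact Xu | rewrite Rabs_left1; lra]. }
    assert (Hrho : rho X m = m).
    { destruct (Rle_lt_or_eq_dec _ _ (rho_le X m)) as [Hlt | Heq]; [exfalso | exact Heq].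
      destruct (Hnear (m - rho X m)) as [u [Xu Hu]]; [lra |].
      assert (u <= rho X m) by (apply rho_ge; [exact Xu | lra]). lra. }
    destruct (proj2 (Hf m (kappa_left_dense X m Xm Hrho)) Hrho) as [L HL].
    destruct (HL eps Heps) as [d1 [Hd1 HLd]].
    destruct (Hnear d1 Hd1) as [u0 [Xu0 Hu0]].
    exists (m - u0); split; [lra |]. exists L. intros u Hu.
    pose proof (ts_floor_between X a b HX u0 u Xu0 ltac:(lra)).
    left. apply HLd; [| lra].
    apply (kappa_of_lt X a b HX); [apply (ts_floor_mem X a b HX) |].
    pose proof (segment_bounds X a b HX m Xm). lra.
Qed.

Lemma floor_right_limit m eps : 0 < eps ->
  exists d, 0 < d /\ forall u, m <= u < m + d -> Rabs (ft u - ft m) <= eps.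
Proof.
  intros Heps.
  destruct (classic (exists d, 0 < d /\ forall u, X u -> ~ (m < u < m + d)))
    as [[d [Hd Hgap]] | Hacc].
  - exists d; split; [exact Hd |]. intros u Hu. unfold ft.
    rewrite (ts_floor_const X a b HX m u) by (try lra; intros w Xw Hw; apply (Hgap w Xw); lra).
    rewrite Rminus_diag, Rabs_R0; lra.
  - assert (Hnear : forall d, 0 < d -> exists u, X u /\ m < u < m + d).
    { intros d Hd. apply NNPP; intros Hn. apply Hacc. exists d; split; [exact Hd |].
      intros u Xu Hu. apply Hn. exists u; split; assumption. }
    assert (Xm : X m).
    { apply (segment_closed X a b HX). intros e He. destruct (Hnear e He) as [u [Xu Hu]].
      exists u; split; [exact Xu | rewrite Rabs_right; lra]. }
    destruct (Hnear 1 Rlt_0_1) as [u1 [Xu1 Hu1]].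
    assert (Hmb : m < b) by (pose proof (segment_bounds X a b HX u1 Xu1); lra).
    assert (Hsg : sigma X m = m).
    { destruct (Rle_lt_or_eq_dec _ _ (sigma_ge X m)) as [Hlt | Heq]; [exfalso | auto].
      destruct (Hnear (sigma X m - m)) as [u [Xu Hu]]; [lra |].
      assert (sigma X m <= u) by (apply sigma_le; [exact Xu | lra]). lra. }
    destruct (proj1 (Hf m (kappa_of_lt X a b HX m Xm Hmb)) Hsg eps Heps) as [d1 [Hd1 Hcont]].
    exists (Rmin d1 (b - m)); split; [apply Rmin_pos; lra |].
    intros u Hu. pose proof (Rmin_l d1 (b - m)). pose proof (Rmin_r d1 (b - m)).
    pose proof (ts_floor_between X a b HX m u Xm ltac:(lra)).
    unfold ft. rewrite (ts_floor_id X a b HX m Xm).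
    left. apply Hcont; [| rewrite Rabs_right; lra].
    apply (kappa_of_lt X a b HX); [apply (ts_floor_mem X a b HX) | lra].
Qed.

Lemma floor_approx_extend m eps : 0 < eps ->
  exists dL dR, 0 < dL /\ 0 < dR /\
  forall x y h, a <= x <= m -> m - dL < x -> m <= y < m + dR ->
    ex_RInt h a x -> (forall s, s <= x -> Rabs (h s - ft s) <= eps) ->
    exists h', ex_RInt h' a y /\ forall s, s <= y -> Rabs (h' s - ft s) <= eps.
Proof.
  intros Heps.
  destruct (floor_left_limit m eps Heps) as [dL [HdL [c Hc]]].
  destruct (floor_right_limit m eps Heps) as [dR [HdR Hr]].
  exists dL, dR; split; [exact HdL | split; [exact HdR |]].
  intros x y h Hx HxL Hy Hh Hhft.
  exists (fun s => if Rle_dec s x then h s else if Rlt_dec s m then c else ft m). split.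
  - apply ex_RInt_Chasles with x; [| apply ex_RInt_Chasles with m].
    + apply ex_RInt_ext with h; [| exact Hh].
      intros s Hs. rewrite Rmin_left, Rmax_right in Hs by lra.
      destruct (Rle_dec s x); [reflexivity | lra].
    + apply ex_RInt_ext with (fun _ => c); [| apply ex_RInt_const].
      intros s Hs. rewrite Rmin_left, Rmax_right in Hs by lra.
      destruct (Rle_dec s x); [lra |]. destruct (Rlt_dec s m); [reflexivity | lra].
    + apply ex_RInt_ext with (fun _ => ft m); [| apply ex_RInt_const].
      intros s Hs. rewrite Rmin_left, Rmax_right in Hs by lra.
      destruct (Rle_dec s x); [lra |]. destruct (Rlt_dec s m); [lra | reflexivity].
  - intros s Hs. destruct (Rle_dec s x) as [Hsx | Hsx]; [exact (Hhft s Hsx) |].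
    rewrite Rabs_minus_sym.
    destruct (Rlt_dec s m); [apply Hc | apply Hr]; lra.
Qed.

(* [ft] is regulated, hence a uniform limit of Riemann-integrable functions;
   the supremum of the points up to which such an approximation exists is [b]. *)
Lemma floor_uniform_approx eps : 0 < eps ->
  exists h, ex_RInt h a b /\ forall s, Rabs (h s - ft s) <= eps.
Proof.
  intros Heps. pose proof (segment_lt X a b HX) as Hab.
  set (S := fun x => a <= x <= b /\
    exists h, ex_RInt h a x /\ forall s, s <= x -> Rabs (h s - ft s) <= eps).
  assert (Sa : S a).
  { split; [lra |]. exists (fun _ => ft a). split; [apply ex_RInt_point |].
    intros s Hs. unfold ft. rewrite (ts_floor_below X a s Hs), Rminus_diag, Rabs_R0. lra. }
  destruct (is_sup_exists S) as [m [Hup Hleast]];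
    [exists a; exact Sa | exists b; intros u [Hu _]; lra |].
  assert (Ham : a <= m) by (apply Hup; exact Sa).
  assert (Hmb : m <= b) by (apply Hleast; intros u [Hu _]; lra).
  destruct (floor_approx_extend m eps Heps) as (dL & dR & HdL & HdR & Hext).
  assert (exists x, S x /\ m - dL < x) as [x [[Hx [h [Hh Hhft]]] HxL]].
  { apply NNPP; intros Hno. assert (m <= m - dL); [| lra]. apply Hleast. intros u Su.
    apply Rnot_lt_le; intros Hu. apply Hno; exists u; split; [exact Su | lra]. }
  assert (Hxm : x <= m) by (apply Hup; split; [exact Hx | exists h; split; assumption]).
  set (m' := Rmin b (m + dR / 2)).
  assert (Hm' : m <= m' <= b /\ m' < m + dR).
  { unfold m'. pose proof (Rmin_l b (m + dR / 2)). pose proof (Rmin_r b (m + dR / 2)).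
    split; [split; [apply Rmin_glb |] |]; lra. }
  assert (Sm' : S m') by (split; [lra | apply (Hext x m' h); auto; lra]).
  assert (Hm'b : m' = b).
  { destruct (Req_dec m b) as [-> | Hne]; [lra |].
    assert (m' <= m) by (apply Hup; exact Sm').
    assert (m < m'); [unfold m'; apply Rmin_glb_lt; lra | lra]. }
  rewrite Hm'b in Sm'. destruct Sm' as [_ [h2 [Hh2 Hh2ft]]].
  exists (fun s => if Rle_dec s b then h2 s else ft s). split.
  - apply ex_RInt_ext with h2; [| exact Hh2].
    intros s Hs. rewrite Rmin_left, Rmax_right in Hs by lra.
    destruct (Rle_dec s b); [reflexivity | lra].
  - intros s. destruct (Rle_dec s b) as [Hsb | Hsb]; [exact (Hh2ft s Hsb) |].
    rewrite Rminus_diag, Rabs_R0; lra.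
Qed.

Lemma ex_RInt_floor : ex_RInt ft a b.
Proof.
  set (P := fun (n : nat) (h : R -> R) =>
    ex_RInt h a b /\ forall s, Rabs (h s - ft s) <= / (INR n + 1)).
  set (hs := fun n => epsilon (inhabits (fun _ : R => 0)) (P n)).
  assert (Hhs : forall n, P n (hs n)).
  { intros n. apply epsilon_spec, floor_uniform_approx.
    apply Rinv_0_lt_compat. pose proof (pos_INR n); lra. }
  destruct (filterlim_RInt hs a b eventually eventually_filter ft (fun n => RInt (hs n) a b))
    as [If [_ HIf]].
  - intros n. apply RInt_correct, Hhs.
  - intros Q [eps HQ]. pose proof (cond_pos eps) as Heps.
    destruct (nfloor_ex (/ eps)) as [N [_ HN]]; [apply Rlt_le, Rinv_0_lt_compat; exact Heps |].
    exists N. intros n Hn. apply HQ. intros t.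
    change (Rabs (hs n t - ft t) < eps).
    eapply Rle_lt_trans; [apply (proj2 (Hhs n) t) |].
    apply le_INR in Hn. rewrite <- (Rinv_inv eps).
    apply Rinv_lt_contravar; [| lra].
    apply Rmult_lt_0_compat; [apply Rinv_0_lt_compat; exact Heps | pose proof (pos_INR n); lra].
  - exists If; exact HIf.
Qed.

Lemma ex_RInt_floor_sub u v : a <= u <= b -> a <= v <= b -> ex_RInt ft u v.
Proof.
  intros Hu Hv.
  assert (Hsub : forall u v, a <= u <= v -> v <= b -> ex_RInt ft u v).
  { intros u' v' Huv Hvb.
    apply (ex_RInt_Chasles_1 (V := R_CompleteNormedModule)) with b; [lra |].
    apply (ex_RInt_Chasles_2 (V := R_CompleteNormedModule)) with a; [lra | exact ex_RInt_floor]. }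
  destruct (Rle_dec u v); [apply Hsub; lra | apply ex_RInt_swap, Hsub; lra].
Qed.

Lemma floor_RInt_increment s u c : a <= s <= b -> a <= u <= b ->
  RInt ft a u - RInt ft a s - c * (u - s) = RInt (fun v => ft v - c) s u.
Proof.
  intros Hs Hu. pose proof (segment_lt X a b HX).
  rewrite RInt_minus_const by (apply ex_RInt_floor_sub; assumption).
  rewrite <- (RInt_Chasles_R ft a s u) by (apply ex_RInt_floor_sub; lra).
  ring.
Qed.

Lemma ex_RInt_floor_minus s u c : a <= s <= b -> a <= u <= b ->
  ex_RInt (fun v => ft v - c) s u.
Proof.
  intros Hs Hu. apply (ex_RInt_minus ft (fun _ => c));
    [apply ex_RInt_floor_sub; assumption | apply ex_RInt_const].
Qed.

(* On [t, sigma t) the integrand is the constant [f t], so only [RInt] over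
   [s, t] contributes, and [ft] is bounded near [t] from the left. *)
Lemma floor_antideriv_right_scattered t : kappa X t -> t < sigma X t ->
  is_delta_deriv X (fun x => RInt ft a x) t (f t).
Proof.
  intros Kt Hsc eps Heps.
  assert (Xt : X t) by apply Kt.
  pose proof (segment_bounds X a b HX t Xt).
  pose proof (segment_bounds X a b HX _ (sigma_mem X a b HX t Xt)).
  set (sg := sigma X t) in *.
  destruct (floor_left_limit t 1 Rlt_0_1) as [dL [HdL [c Hc]]].
  set (K := Rabs (c - f t) + 1).
  assert (HK : 0 < K) by (unfold K; pose proof (Rabs_pos (c - f t)); lra).
  set (mu := sg - t). assert (Hmu : 0 < mu) by (unfold mu; lra).
  assert (Hd : 0 < eps * mu / K) by (apply Rdiv_lt_0_compat; [apply Rmult_lt_0_compat |]; lra).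
  exists (Rmin mu (Rmin dL (eps * mu / K))). split; [repeat apply Rmin_pos; lra |].
  intros s Xs Hts. pose proof (segment_bounds X a b HX s Xs).
  pose proof (Rmin_l mu (Rmin dL (eps * mu / K))). pose proof (Rmin_r mu (Rmin dL (eps * mu / K))).
  pose proof (Rmin_l dL (eps * mu / K)). pose proof (Rmin_r dL (eps * mu / K)).
  assert (Hst : s <= t).
  { apply Rnot_lt_le; intros Hlt.
    assert (sg <= s) by (apply sigma_le; [exact Xs | exact Hlt]).
    rewrite Rabs_left in Hts by lra. unfold mu in *. lra. }
  rewrite Rabs_right in Hts by lra.
  rewrite floor_RInt_increment by lra.
  rewrite <- (RInt_Chasles_R _ s t sg) by (apply ex_RInt_floor_minus; lra).
  assert (Hzero : RInt (fun u => ft u - f t) t sg = 0).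
  { rewrite (RInt_ext _ (fun _ => 0)), RInt_const; [apply Rmult_0_r |].
    intros x Hx. rewrite Rmin_left, Rmax_right in Hx by lra.
    unfold ft. rewrite (ts_floor_gap X a b HX t x Xt) by (unfold sg in Hx; lra). apply Rminus_diag. }
  rewrite Hzero, Rplus_0_r.
  eapply Rle_trans; [apply (RInt_abs_le_const _ s t K); [apply ex_RInt_floor_minus; lra |] |].
  - intros u Hu. rewrite Rmin_left, Rmax_right in Hu by lra.
    destruct (Req_dec u t) as [-> | Hne].
    + unfold ft. rewrite (ts_floor_id X a b HX t Xt), Rminus_diag, Rabs_R0. lra.
    + specialize (Hc u ltac:(lra)).
      replace (ft u - f t) with ((ft u - c) + (c - f t)) by ring.
      eapply Rle_trans; [apply Rabs_triang |]. unfold K. lra.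
  - rewrite Rabs_right, (Rabs_right (sg - s)) by lra.
    assert (K * (t - s) <= eps * mu).
    { apply Rle_trans with (K * (eps * mu / K)); [apply Rmult_le_compat_l; lra |].
      right. field. lra. }
    assert (eps * mu <= eps * (sg - s)) by (apply Rmult_le_compat_l; unfold mu; lra).
    lra.
Qed.

Lemma floor_antideriv_right_dense t : kappa X t -> sigma X t = t ->
  is_delta_deriv X (fun x => RInt ft a x) t (f t).
Proof.
  intros Kt Hde eps Heps.
  assert (Xt : X t) by apply Kt.
  pose proof (segment_bounds X a b HX t Xt).
  destruct (proj1 (Hf t Kt) Hde eps Heps) as [d1 [Hd1 Hcont]].
  assert (Hex : exists d, 0 < d /\ d <= d1 /\ (t < b -> d <= b - t)).
  { destruct (Rlt_dec t b).
    - exists (Rmin d1 (b - t)). split; [apply Rmin_pos; lra |].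
      split; [apply Rmin_l | intros; apply Rmin_r].
    - exists d1. split; [lra | split; [lra | intros; lra]]. }
  destruct Hex as [d [Hd [Hdd1 Hdb]]].
  exists d. split; [exact Hd |]. intros s Xs Hts. pose proof (segment_bounds X a b HX s Xs).
  rewrite Hde, floor_RInt_increment by lra.
  apply RInt_abs_le_const; [apply ex_RInt_floor_minus; lra |].
  intros u Hu. pose proof (ts_floor_mem X a b HX u) as Xfu.
  assert (Hfu : Rmin s t <= ts_floor X a u <= u).
  { destruct (Rle_dec s t).
    - rewrite Rmin_left in * by lra. apply (ts_floor_between X a b HX s u Xs). lra.
    - rewrite Rmin_right in * by lra. apply (ts_floor_between X a b HX t u Xt). lra. }
  destruct (Req_dec (ts_floor X a u) t) as [Heq | Hne].
  - unfold ft. rewrite Heq, Rminus_diag, Rabs_R0. lra.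
  - left. unfold ft. pose proof (segment_bounds X a b HX _ Xfu).
    unfold Rmax, Rmin in *. destruct (Rle_dec s t).
    + rewrite Rabs_right in Hts by lra.
      apply Hcont; [apply (kappa_of_lt X a b HX); [exact Xfu | lra] | rewrite Rabs_left1; lra].
    + rewrite Rabs_left in Hts by lra.
      apply Hcont; [apply (kappa_of_lt X a b HX); [exact Xfu |] | rewrite Rabs_right; lra].
      destruct (Rlt_dec t b); [specialize (Hdb r); lra | lra].
Qed.

End Antiderivative.

Lemma rd_continuous_antideriv X a b f :
  ts_segment X a b -> rd_continuous X (kappa X) f -> exists F, is_delta_antideriv X f F.
Proof.
  intros HX Hf. exists (fun x => RInt (fun s => f (ts_floor X a s)) a x).
  intros t Kt. destruct (Rle_lt_or_eq_dec _ _ (sigma_ge X t)) as [Hsc | Hde].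
  - exact (floor_antideriv_right_scattered X a b f HX Hf t Kt Hsc).
  - exact (floor_antideriv_right_dense X a b f HX Hf t Kt (eq_sym Hde)).
Qed.

Lemma delta_int_refl X a b f r :
  ts_segment X a b -> rd_continuous X (kappa X) f -> X r -> delta_int X f r r = 0.
Proof.
  intros HX Hf Xr. destruct (rd_continuous_antideriv X a b f HX Hf) as [F HF].
  rewrite (delta_int_antideriv X a b HX f F r r HF Xr Xr). apply Rminus_diag.
Qed.

Lemma lincomb_close al be A B u v eps : 0 < eps ->
  Rabs (u - A) < eps / (Rabs al + Rabs be + 1) ->
  Rabs (v - B) < eps / (Rabs al + Rabs be + 1) ->
  Rabs (al * u + be * v - (al * A + be * B)) < eps.
Proof.
  intros Heps Hu Hv. set (K := Rabs al + Rabs be + 1) in *.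
  assert (HK : 0 < K) by (unfold K; pose proof (Rabs_pos al); pose proof (Rabs_pos be); lra).
  replace (al * u + be * v - (al * A + be * B)) with (al * (u - A) + be * (v - B)) by ring.
  eapply Rle_lt_trans; [apply Rabs_triang |]. rewrite !Rabs_mult.
  set (e := eps / K) in *. assert (HeK : e * K = eps) by (unfold e; field; lra).
  assert (Rabs al * Rabs (u - A) <= Rabs al * e) by (apply Rmult_le_compat_l; [apply Rabs_pos | lra]).
  assert (Rabs be * Rabs (v - B) <= Rabs be * e) by (apply Rmult_le_compat_l; [apply Rabs_pos | lra]).
  assert (0 < e) by (unfold e; apply Rdiv_lt_0_compat; lra).
  unfold K in HeK. nra.
Qed.

Section RdContinuity.

Variables (X D : R -> Prop).

Lemma rd_continuous_const k : rd_continuous X D (fun _ => k).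
Proof.
  intros t Dt. split.
  - intros _ eps Heps. exists 1. split; [lra |]. intros. rewrite Rminus_diag, Rabs_R0; lra.
  - intros _. exists k. intros eps Heps. exists 1. split; [lra |]. intros. rewrite Rminus_diag, Rabs_R0; lra.
Qed.

Lemma rd_continuous_lincomb f g al be :
  rd_continuous X D f -> rd_continuous X D g ->
  rd_continuous X D (fun x => al * f x + be * g x).
Proof.
  intros Hf Hg t Dt. destruct (Hf t Dt) as [Hf1 Hf2]. destruct (Hg t Dt) as [Hg1 Hg2].
  assert (HK : 0 < Rabs al + Rabs be + 1) by (pose proof (Rabs_pos al); pose proof (Rabs_pos be); lra).
  split.
  - intros Hs eps Heps. set (e := eps / (Rabs al + Rabs be + 1)).
    assert (He : 0 < e) by (unfold e; apply Rdiv_lt_0_compat; lra).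
    destruct (Hf1 Hs e He) as [d1 [Hd1 H1]]. destruct (Hg1 Hs e He) as [d2 [Hd2 H2]].
    exists (Rmin d1 d2). split; [apply Rmin_pos; lra |]. intros s Ds Hst.
    pose proof (Rmin_l d1 d2). pose proof (Rmin_r d1 d2).
    apply lincomb_close; [lra | apply H1 | apply H2]; auto; lra.
  - intros Hr. destruct (Hf2 Hr) as [L1 HL1]. destruct (Hg2 Hr) as [L2 HL2].
    exists (al * L1 + be * L2). intros eps Heps. set (e := eps / (Rabs al + Rabs be + 1)).
    assert (He : 0 < e) by (unfold e; apply Rdiv_lt_0_compat; lra).
    destruct (HL1 e He) as [d1 [Hd1 H1]]. destruct (HL2 e He) as [d2 [Hd2 H2]].
    exists (Rmin d1 d2). split; [apply Rmin_pos; lra |]. intros s Ds Hst.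
    pose proof (Rmin_l d1 d2). pose proof (Rmin_r d1 d2).
    apply lincomb_close; [lra | apply H1 | apply H2]; auto; lra.
Qed.

End RdContinuity.

Lemma xlnx_continuous_pos x0 : 0 < x0 -> forall eps, 0 < eps -> exists d, 0 < d /\
  forall x, Rabs (x - x0) < d -> Rabs (x * ln x - x0 * ln x0) < eps.
Proof.
  intros Hx0 eps Heps.
  assert (Hc : continuity_pt (fun x => x * ln x) x0).
  { apply (continuity_pt_mult (fun x => x) ln); [apply continuity_pt_id |].
    apply derivable_continuous_pt. exists (/ x0). apply derivable_pt_lim_ln; exact Hx0. }
  destruct (Hc eps Heps) as [d [Hd Hx]]. exists d; split; [exact Hd |].
  intros x Hxx. destruct (Req_dec x0 x) as [<- | Hne].
  - rewrite Rminus_diag, Rabs_R0; exact Heps.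
  - apply (Hx x). split; [split; [exact I | exact Hne] | exact Hxx].
Qed.

(* With [v = - ln x] and [E = exp (v / 2) >= 1 + v / 2] one has [x * E^2 = 1],
   whence [(x * v)^2 < 4 * x]. *)
Lemma xlnx_small eps : 0 < eps -> exists d, 0 < d /\
  forall x, 0 < x < d -> Rabs (x * ln x) < eps.
Proof.
  intros Heps. exists (Rmin 1 (eps * eps / 4)). split; [apply Rmin_pos; [lra | nra] |].
  intros x Hx. pose proof (Rmin_l 1 (eps * eps / 4)). pose proof (Rmin_r 1 (eps * eps / 4)).
  assert (Hln : ln x < 0) by (rewrite <- ln_1; apply ln_increasing; lra).
  set (v := - ln x). set (E := exp (v / 2)).
  assert (HE : 1 + v / 2 <= E) by apply exp_ineq1_le.
  assert (HxE : x * (E * E) = 1).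
  { unfold E. rewrite <- exp_plus. replace (v / 2 + v / 2) with (- ln x) by (unfold v; field).
    rewrite exp_Ropp, exp_ln by lra. field. lra. }
  rewrite Rabs_left by nra.
  replace (- (x * ln x)) with (x * v) by (unfold v; ring).
  assert (Hv : 0 < v) by (unfold v; lra).
  assert (H1 : 0 < x * v) by (apply Rmult_lt_0_compat; lra).
  assert (H2 : x * v < 2 * x * E) by nra.
  assert (H3 : (x * v) * (x * v) < 4 * x) by nra.
  nra.
Qed.

Lemma xlnx_continuous x0 : 0 <= x0 -> forall eps, 0 < eps -> exists d, 0 < d /\
  forall x, 0 < x -> Rabs (x - x0) < d -> Rabs (x * ln x - x0 * ln x0) < eps.
Proof.
  intros Hx0 eps Heps. destruct (Rle_lt_or_eq_dec _ _ Hx0) as [Hpos | <-].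
  - destruct (xlnx_continuous_pos x0 Hpos eps Heps) as [d [Hd Hx]].
    exists d; split; [exact Hd |]. intros x _. apply Hx.
  - destruct (xlnx_small eps Heps) as [d [Hd Hx]]. exists d; split; [exact Hd |].
    intros x Hxpos Hxd. rewrite Rmult_0_l, !Rminus_0_r.
    rewrite Rminus_0_r, Rabs_right in Hxd by lra. apply Hx; lra.
Qed.

(* If no point of [D] lies just left of [t], any value is a left limit there;
   otherwise the left limit of the positive [p] is [>= 0], where [x ln x] is
   continuous. *)
Lemma rd_continuous_xlnx X D p : (forall x, D x -> 0 < p x) -> rd_continuous X D p ->
  rd_continuous X D (fun x => p x * ln (p x)).
Proof.
  intros Hp Hc t Dt. destruct (Hc t Dt) as [H1 H2]. split.
  - intros Hs eps Heps.
    destruct (xlnx_continuous (p t) ltac:(left; apply Hp; auto) eps Heps) as [d [Hd Hh]].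
    destruct (H1 Hs d Hd) as [d1 [Hd1 Hq]]. exists d1. split; [auto |]. intros s Ds Hst.
    apply Hh; [apply Hp; auto | apply Hq; auto].
  - intros Hr.
    destruct (classic (exists d0, 0 < d0 /\ forall s, D s -> ~ (t - d0 < s < t)))
      as [[d0 [Hd0 Hgap]] | Hacc].
    + exists 0. intros eps Heps. exists d0. split; [auto |].
      intros s Ds Hs. exfalso; apply (Hgap s Ds Hs).
    + destruct (H2 Hr) as [L HL].
      assert (HL0 : 0 <= L).
      { apply Rnot_lt_le; intros Hneg.
        destruct (HL (- L)) as [d [Hd Hq]]; [lra |].
        apply Hacc. exists d. split; [auto |]. intros s Ds Hs. specialize (Hq s Ds Hs).
        specialize (Hp s Ds). rewrite Rabs_right in Hq by lra. lra. }
      exists (L * ln L). intros eps Heps. destruct (xlnx_continuous L HL0 eps Heps) as [d [Hd Hh]].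
      destruct (HL d Hd) as [d1 [Hd1 Hq]]. exists d1. split; [auto |]. intros s Ds Hs.
      apply Hh; [apply Hp; auto | apply Hq; auto].
Qed.

(* Equivalent to [1 + ln (C / x) <= C / x], i.e. [1 + z <= exp z]. *)
Lemma xlnx_tangent x C : 0 < x -> 0 < C -> C * ln C + (1 + ln C) * (x - C) <= x * ln x.
Proof.
  intros Hx HC.
  assert (Hy : 0 < C * / x) by (apply Rmult_lt_0_compat; [lra | apply Rinv_0_lt_compat; lra]).
  pose proof (exp_ineq1_le (ln (C * / x))) as H. rewrite exp_ln in H by exact Hy.
  rewrite ln_mult, ln_Rinv in H by (try apply Rinv_0_lt_compat; lra).
  assert (x * (1 + (ln C + - ln x)) <= x * (C * / x)) by (apply Rmult_le_compat_l; lra).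
  replace (x * (C * / x)) with C in H0 by (field; lra). nra.
Qed.

Lemma ts_segment_tsI T a b : time_scale T -> T a -> T b -> a < b -> ts_segment (tsI T a b) a b.
Proof.
  intros [_ HT] Ta Tb Hab. split; [| split; [| split; [| split]]].
  - intros x Hx. split.
    + apply HT. intros eps Heps. destruct (Hx eps Heps) as [y [[Ty _] Hy]]. exists y; split; auto.
    + split; apply Rnot_lt_le; intros Hout.
      * destruct (Hx (a - x)) as [y [[_ Hy1] Hy]]; [lra |].
        pose proof (Rle_abs (y - x)). lra.
      * destruct (Hx (x - b)) as [y [[_ Hy1] Hy]]; [lra |].
        pose proof (Rle_abs (- (y - x))). rewrite Rabs_Ropp in *. lra.
  - split; [exact Ta | lra].
  - split; [exact Tb | lra].
  - exact Hab.
  - intros u [_ Hu]; exact Hu.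
Qed.

Section Extremal.

Variables (X : R -> Prop) (a b : R) (phi : R -> R).
Hypothesis HX : ts_segment X a b.
Hypothesis Hphi : rd_continuous X (kappa X) phi.

Lemma extremal_C1rd C :
  C1rd X (fun t => C * (t - a) - delta_int X phi a t) (fun t => C - phi t).
Proof.
  destruct (rd_continuous_antideriv X a b phi HX Hphi) as [Phi HPhi].
  split.
  - intros t Kt. assert (Xt : X t) by apply Kt.
    replace (C - phi t) with (1 * (C * 1 + -1 * phi t) + (C * - a + Phi a) * 0) by ring.
    apply (delta_deriv_ext X (fun x => 1 * (C * x + -1 * Phi x) + (C * - a + Phi a) * 1)).
    + intros u Xu. rewrite (delta_int_antideriv X a b HX phi Phi a u HPhi); [ring | apply HX | exact Xu].
    + apply (sigma_mem X a b HX); exact Xt.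
    + apply delta_deriv_lincomb; [apply delta_deriv_lincomb | apply delta_deriv_const].
      * apply delta_deriv_id.
      * apply HPhi; exact Kt.
  - replace (fun t => C - phi t) with (fun x => 1 * C + -1 * phi x)
      by (apply functional_extensionality; intros; ring).
    apply rd_continuous_lincomb; [apply rd_continuous_const | exact Hphi].
Qed.

Lemma Ffun_extremal C : Ffun X phi (fun t => C - phi t) a b = (b - a) * C * ln C.
Proof.
  unfold Ffun.
  rewrite (delta_int_antideriv X a b HX _ (fun x => C * ln C * x + 0 * 1));
    [ring | | apply HX | apply HX].
  intros t Kt.
  replace ((phi t + (C - phi t)) * ln (phi t + (C - phi t))) with (C * ln C * 1 + 0 * 0)
    by (replace (phi t + (C - phi t)) with C by ring; ring).
  apply delta_deriv_lincomb; [apply delta_deriv_id | apply delta_deriv_const].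
Qed.

Lemma Ffun_tangent_bound C y yd :
  (forall t, kappa X t -> 0 < phi t) -> 0 < C ->
  C1rd X y yd -> (forall t, kappa X t -> 0 < yd t) ->
  (b - a) * C * ln C + (1 + ln C) * (y b - y a + delta_int X phi a b - C * (b - a))
    <= Ffun X phi yd a b.
Proof.
  intros Hphi_pos HC [Hyd Hyd_rd] Hyd_pos.
  pose proof (segment_min_mem X a b HX) as Xa. pose proof (segment_max_mem X a b HX) as Xb.
  set (K1 := C * ln C - (1 + ln C) * C). set (K2 := 1 + ln C).
  set (g := fun t => (phi t + yd t) * ln (phi t + yd t)).
  assert (Hg : rd_continuous X (kappa X) g).
  { apply (rd_continuous_xlnx X (kappa X) (fun x => phi x + yd x)).
    - intros x Kx. pose proof (Hphi_pos x Kx). pose proof (Hyd_pos x Kx). lra.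
    - pose proof (rd_continuous_lincomb X (kappa X) phi yd 1 1 Hphi Hyd_rd) as Hsum.
      replace (fun x => phi x + yd x) with (fun x => 1 * phi x + 1 * yd x)
        by (apply functional_extensionality; intros; ring).
      exact Hsum. }
  destruct (rd_continuous_antideriv X a b g HX Hg) as [G HG].
  destruct (rd_continuous_antideriv X a b phi HX Hphi) as [Phi HPhi].
  unfold Ffun. fold g.
  rewrite (delta_int_antideriv X a b HX g G a b HG Xa Xb),
          (delta_int_antideriv X a b HX phi Phi a b HPhi Xa Xb).
  pose proof (delta_int_le X a b HX
    (fun t => K1 * 1 + K2 * (1 * phi t + 1 * yd t)) g
    (fun x => K1 * x + K2 * (1 * Phi x + 1 * y x)) G) as Hle.
  enough (K1 * b + K2 * (1 * Phi b + 1 * y b) - (K1 * a + K2 * (1 * Phi a + 1 * y a))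
            <= G b - G a) by (unfold K1, K2 in *; nra).
  apply Hle; [| exact HG |].
  - intros t Kt. apply delta_deriv_lincomb; [apply delta_deriv_id |].
    apply delta_deriv_lincomb; [apply HPhi | apply Hyd]; exact Kt.
  - intros t Kt. unfold g, K1, K2.
    pose proof (xlnx_tangent (phi t + yd t) C
      ltac:(pose proof (Hphi_pos t Kt); pose proof (Hyd_pos t Kt); lra) HC). lra.
Qed.

End Extremal.

Theorem theorem3p6 (T : R -> Prop) (a b B : R) (phi : R -> R) :
  time_scale T -> T a -> T b -> a < b ->
  (forall t, kappa (tsI T a b) t -> 0 < phi t) ->
  rd_continuous (tsI T a b) (kappa (tsI T a b)) phi ->
  (forall t, kappa (tsI T a b) t ->
     (B + delta_int (tsI T a b) phi a b) / (b - a) > phi t) ->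
  (exists yd0 : R -> R,
     C1rd (tsI T a b)
       (fun t => (B + delta_int (tsI T a b) phi a b) / (b - a) * (t - a)
                 - delta_int (tsI T a b) phi a t) yd0 /\
     (forall t, kappa (tsI T a b) t -> 0 < yd0 t) /\
     (B + delta_int (tsI T a b) phi a b) / (b - a) * (a - a)
       - delta_int (tsI T a b) phi a a = 0 /\
     (B + delta_int (tsI T a b) phi a b) / (b - a) * (b - a)
       - delta_int (tsI T a b) phi a b = B /\
     Ffun (tsI T a b) phi yd0 a b =
       (b - a) * ((B + delta_int (tsI T a b) phi a b) / (b - a))
         * ln ((B + delta_int (tsI T a b) phi a b) / (b - a))) /\
  (forall y yd : R -> R,
     C1rd (tsI T a b) y yd ->
     (forall t, kappa (tsI T a b) t -> 0 < yd t) ->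
     y a = 0 -> y b = B ->
     (b - a) * ((B + delta_int (tsI T a b) phi a b) / (b - a))
       * ln ((B + delta_int (tsI T a b) phi a b) / (b - a))
     <= Ffun (tsI T a b) phi yd a b).
Proof.
  intros HT Ta Tb Hab Hpos Hrd HCgt.
  pose proof (ts_segment_tsI T a b HT Ta Tb Hab) as HX.
  set (X := tsI T a b) in *. set (I := delta_int X phi a b) in *.
  set (C := (B + I) / (b - a)) in *.
  assert (Ka : kappa X a) by (apply (kappa_of_lt X a b HX); [apply HX | exact Hab]).
  assert (HC : 0 < C) by (pose proof (HCgt a Ka); pose proof (Hpos a Ka); lra).
  assert (HCb : C * (b - a) = B + I) by (unfold C; field; lra).
  split.
  - exists (fun t => C - phi t).
    split; [exact (extremal_C1rd X a b phi HX Hrd C) |].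
    split; [intros t Kt; pose proof (HCgt t Kt); lra |].
    split; [rewrite (delta_int_refl X a b phi a HX Hrd (segment_min_mem X a b HX)); ring |].
    split; [rewrite HCb; unfold I; ring | exact (Ffun_extremal X a b phi HX C)].
  - intros y yd Hy Hyd_pos Hya Hyb.
    pose proof (Ffun_tangent_bound X a b phi HX Hrd C y yd Hpos HC Hy Hyd_pos) as Hbound.
    rewrite Hya, Hyb in Hbound. fold I in Hbound.
    replace (B - 0 + I - C * (b - a)) with 0 in Hbound by lra. lra.
Qed.
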